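(* Let $T$ be a monoidal monad on $\mathbf{Set}$, let $\Sigma$ be a signature and $\cdot\in\Sigma$ a binary operation symbol. Let $t[-]$ be a $\Sigma$-term with a single hole, built only from binary operation symbols of $\Sigma$, in which no variable occurs more than once and the variable $x$ does not occur. If $T$ preserves the equation $t[x]=t[x\cdot x]$, then $T$ is relevant.
   Context: $t[N]$ denotes the term obtained by placing the term $N$ in the hole of $t$. A monoidal monad on $\mathbf{Set}$ is a monad with natural $\psi_{X,Y}\colon TX\times TY\to T(X\times Y)$ making it lax monoidal with $\psi^0=\eta_1$ and with $\eta,\mu$ monoidal (equivalently a commutative monad); $\psi^n$ is its $n$-ary version. The lifting $\widehat T\mathcal A$ of a $\Sigma$-algebra $\mathcal A$ on $A$ has carrier $TA$ and operations $T\sigma_{\mathcal A}\circ\psi^{\mathrm{ar}(\sigma)}$; $T$ preserves an equation if $\widehat T\mathcal A$ satisfies it whenever $\mathcal A$ does. $T$ is relevant if $\psi_{A,B}\circ\langle T\pi_1,T\pi_2\rangle=\mathrm{id}_{T(A\times B)}$ for all sets $A,B$ (equivalently $\psi_{A,A}\circ\Delta_{TA}=T\Delta_A$ for all $A$). *)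

From mathcomp Require Import all_boot.
Set Implicit Arguments.
Unset Strict Implicit.
Unset Printing Implicit Defensive.

Record monoidal_monad := MonoidalMonad {
  MT :> Type -> Type;
  fmap : forall A B : Type, (A -> B) -> MT A -> MT B;
  eta : forall A : Type, A -> MT A;
  mu : forall A : Type, MT (MT A) -> MT A;
  psi : forall A B : Type, MT A * MT B -> MT (A * B);
  fmap_id : forall A (m : MT A), fmap id m = m;
  fmap_comp : forall A B C (f : A -> B) (g : B -> C) (m : MT A),
      fmap (fun a => g (f a)) m = fmap g (fmap f m);
  eta_nat : forall A B (f : A -> B) (a : A), fmap f (eta a) = eta (f a);
  mu_nat : forall A B (f : A -> B) (m : MT (MT A)),
      fmap f (mu m) = mu (fmap (fmap f) m);
  mu_eta : forall A (m : MT A), mu (eta m) = m;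
  mu_fmap_eta : forall A (m : MT A), mu (fmap (@eta A) m) = m;
  mu_mu : forall A (m : MT (MT (MT A))), mu (mu m) = mu (fmap (@mu A) m);
  psi_nat : forall A A' B B' (f : A -> A') (g : B -> B') (a : MT A) (b : MT B),
      psi (fmap f a, fmap g b) = fmap (fun p => (f p.1, g p.2)) (psi (a, b));
  (* lax monoidal, with psi^0 = eta_1 *)
  psi_unitl : forall B (b : MT B), fmap snd (psi (eta tt, b)) = b;
  psi_unitr : forall A (a : MT A), fmap fst (psi (a, eta tt)) = a;
  psi_assoc : forall A B C (a : MT A) (b : MT B) (c : MT C),
      fmap (fun p => (p.1.1, (p.1.2, p.2))) (psi (psi (a, b), c))
      = psi (a, psi (b, c));
  eta_monoidal : forall A B (a : A) (b : B), psi (eta a, eta b) = eta (a, b);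
  mu_monoidal : forall A B (a : MT (MT A)) (b : MT (MT B)),
      mu (fmap (@psi A B) (psi (a, b))) = psi (mu a, mu b)
}.

Arguments fmap {m0} {A B}.
Arguments eta {m0} {A}.
Arguments mu {m0} {A}.
Arguments psi {m0} {A B}.

Definition relevant (T : monoidal_monad) : Prop :=
  forall (A B : Type) (m : T (A * B)%type), psi (fmap fst m, fmap snd m) = m.

Definition fun0 (A : Type) (i : 'I_0) : A := False_rect A ltac:(by case: i).

Definition consf (A : Type) (n : nat) (a : A) (g : 'I_n -> A) : 'I_n.+1 -> A :=
  fun i => match unlift ord0 i with Some j => g j | None => a end.

Fixpoint psin (T : monoidal_monad) (A : Type) (n : nat) :
    ('I_n -> T A) -> T ('I_n -> A) :=
  match n return ('I_n -> T A) -> T ('I_n -> A) with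
  | 0 => fun _ => fmap (fun _ : unit => @fun0 A) (eta tt)
  | n'.+1 => fun f =>
      fmap (fun p : A * ('I_n' -> A) => consf p.1 p.2)
           (psi (f ord0, @psin T A n' (fun j => f (lift ord0 j))))
  end.

Inductive term (Sym : Type) (ar : Sym -> nat) (V : Type) : Type :=
  | Var of V
  | Op (s : Sym) of ('I_(ar s) -> term ar V).

Arguments Var {Sym ar V}.
Arguments Op {Sym ar V}.

Definition alg_ops (Sym : Type) (ar : Sym -> nat) (A : Type) :=
  forall s : Sym, ('I_(ar s) -> A) -> A.

Fixpoint eval Sym (ar : Sym -> nat) V A (ops : alg_ops ar A) (env : V -> A)
    (t : term ar V) : A :=
  match t with
  | Var v => env v
  | Op s f => ops s (fun i => eval ops env (f i))
  end.

Definition satisfies Sym (ar : Sym -> nat) A (ops : alg_ops ar A)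
    (l r : term ar nat) : Prop :=
  forall env : nat -> A, eval ops env l = eval ops env r.

Definition lift_ops (T : monoidal_monad) Sym (ar : Sym -> nat) A
    (ops : alg_ops ar A) : alg_ops ar (T A) :=
  fun s f => fmap (ops s) (psin f).

Definition preserves (T : monoidal_monad) Sym (ar : Sym -> nat)
    (l r : term ar nat) : Prop :=
  forall (A : Type) (ops : alg_ops ar A),
    satisfies ops l r -> satisfies (@lift_ops T _ _ _ ops) l r.

(* ---------- terms with a hole: hole = variable None ---------- *)
Fixpoint vars Sym (ar : Sym -> nat) V (t : term ar V) : seq V :=
  match t with
  | Var v => [:: v]
  | Op s f => flatten [seq vars (f i) | i <- enum 'I_(ar s)]
  end.

Fixpoint all_binary Sym (ar : Sym -> nat) V (t : term ar V) : bool :=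
  match t with
  | Var _ => true
  | Op s f => (ar s == 2) && all (fun i => all_binary (f i)) (enum 'I_(ar s))
  end.

Fixpoint plug Sym (ar : Sym -> nat) (t : term ar (option nat)) (N : term ar nat)
    : term ar nat :=
  match t with
  | Var None => N
  | Var (Some v) => Var v
  | Op s f => Op s (fun i => plug (f i) N)
  end.

(** The counterexample algebra is the rectangular band [X = A * B] with a
    unit [None] adjoined: [(a, b) * (c, d) = (a, d)], an idempotent operation.
    Give every binary symbol this meaning and every other symbol some constant.
    In the lifted algebra on [T X] the element [eta None] is still a unit, so
    in [t[x]] and [t[x * x]] every subterm off the path to the hole evaluates
    to it, and both sides reduce to the value at the hole.  Evaluating at
    [x := T Some m], preservation of the equation thus says [y = y * y] in
    [T X]; cancelling [T Some] yields [m = T(pi_11, pi_22) (psi (m, m))],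
    which by naturality of [psi] is relevance. *)

From Stdlib Require Import FunctionalExtensionality.
From mathcomp Require Import all_boot.

Set Implicit Arguments.
Unset Strict Implicit.
Unset Printing Implicit Defensive.

Definition pair2 A (a b : A) : 'I_2 -> A := consf a (consf b (@fun0 A)).

Lemma pair2_0 A (a b : A) : pair2 a b ord0 = a.
Proof. by rewrite /pair2 /consf unlift_none. Qed.

Lemma pair2_1 A (a b : A) : pair2 a b (lift ord0 ord0) = b.
Proof. by rewrite /pair2 /consf liftK unlift_none. Qed.

Section MonoidalMonad.
Variable T : monoidal_monad.

Lemma eq_fmap A B (f g : A -> B) (m : T A) : f =1 g -> fmap f m = fmap g m.
Proof. by move=> /functional_extensionality ->. Qed.

Lemma psi_etar A C (u : T A) (c : C) : psi (u, eta c) = fmap (fun a => (a, c)) u.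
Proof.
rewrite -{1}(fmap_id u) -(@eta_nat T _ _ (fun _ : unit => c) tt) psi_nat.
by rewrite -[X in _ = fmap _ X](psi_unitr u) -fmap_comp.
Qed.

Lemma psi_etal A C (u : T A) (c : C) : psi (eta c, u) = fmap (fun a => (c, a)) u.
Proof.
rewrite -{1}(fmap_id u) -(@eta_nat T _ _ (fun _ : unit => c) tt) psi_nat.
by rewrite -[X in _ = fmap _ X](psi_unitl u) -fmap_comp.
Qed.

Lemma fmap_Some_inj A : injective (@fmap T _ _ (@Some A)).
Proof.
move=> u v.
(* [mu \o fmap g] is a left inverse of [fmap Some]; the default [u] is never
   reached. *)
pose g o := if o is Some a then eta a else u.
have fmap_SomeK w : mu (fmap g (fmap (@Some A) w)) = w.
  by rewrite -fmap_comp mu_fmap_eta.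
by move=> uv; rewrite -[LHS]fmap_SomeK uv fmap_SomeK.
Qed.

Lemma psin2 A (g : 'I_2 -> T A) :
  psin g = fmap (fun p => pair2 p.1 p.2) (psi (g ord0, g (lift ord0 ord0))).
Proof.
rewrite /= eta_nat psi_etar -fmap_comp -{1}(fmap_id (g ord0)) psi_nat -!fmap_comp.
by apply: eq_fmap.
Qed.

End MonoidalMonad.

Section FlattenUniq.
Variables (I T : eqType) (F : I -> seq T).

Lemma flatten_map_uniq s i : uniq (flatten (map F s)) -> i \in s -> uniq (F i).
Proof.
elim: s => //= k s IH; rewrite cat_uniq inE => /and3P[Fk_uniq _ s_uniq].
by case/orP=> [/eqP-> | /(IH s_uniq)].
Qed.

Lemma flatten_map_uniq_disjoint s i j y :
  uniq (flatten (map F s)) -> i \in s -> j \in s -> y \in F i -> y \in F j -> i = j.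
Proof.
elim: s => //= k s IH; rewrite cat_uniq !inE => /and3P[_ disj s_uniq].
have notin_k l : l \in s -> y \in F l -> y \notin F k.
  move=> ls yl; apply: contra disj => yk.
  by apply/hasP; exists y => //; apply/flatten_mapP; exists l.
case/orP=> [/eqP-> | si]; case/orP=> [/eqP-> | sj] //.
- by move=> yk /(notin_k _ sj); rewrite yk.
- by move=> /(notin_k _ si) /negP.
- exact: IH.
Qed.

End FlattenUniq.

Section Terms.
Variables (Sym : Type) (ar : Sym -> nat).

Lemma eval_plug M (ops : alg_ops ar M) env (u : term ar (option nat)) N :
  eval ops env (plug u N)
  = eval ops (fun o => if o is Some v then env v else eval ops env N) u.
Proof.
elim: u => [[v|]|s f IH] //=.
by congr (ops s _); apply: functional_extensionality => i; apply: IH.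
Qed.

Lemma satisfies_plug M (ops : alg_ops ar M) u l r :
  satisfies ops l r -> satisfies ops (plug u l) (plug u r).
Proof. by move=> lr env; rewrite !eval_plug lr. Qed.

(* For a binary [ops s] this says that [e] is a two-sided unit; quantifying
   over the position [i] avoids casting ['I_(ar s)] to ['I_2]. *)
Definition binary_unit M (ops : alg_ops ar M) (e : M) :=
  forall s (g : 'I_(ar s) -> M) i,
    ar s = 2 -> (forall j, j != i -> g j = e) -> ops s g = g i.

Variables (M : Type) (ops : alg_ops ar M) (e : M).
Hypothesis ops_unit : binary_unit ops e.

Lemma all_binary_sub V s (f : 'I_(ar s) -> term ar V) i :
  all_binary (Op s f) -> all_binary (f i).
Proof. by case/andP=> _ /allP; apply; rewrite mem_enum. Qed.

Lemma vars_sub (V : eqType) s (f : 'I_(ar s) -> term ar V) i v :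
  v \in vars (f i) -> v \in vars (Op s f).
Proof. by move=> vi; apply/flatten_mapP; exists i; rewrite ?mem_enum. Qed.

Lemma eval_unit (V : eqType) (env : V -> M) (u : term ar V) :
  all_binary u -> {in vars u, forall v, env v = e} -> eval ops env u = e.
Proof.
elim: u => [v _ env_e | s f IH]; first exact: env_e (mem_head _ _).
move=> bin env_e; have /andP[/eqP s2 _] := bin.
have i : 'I_(ar s) by rewrite s2; exact: ord0.
have fe j : eval ops env (f j) = e.
  by apply: IH; [exact: all_binary_sub bin | move=> v /vars_sub; apply: env_e].
by rewrite /= (@ops_unit _ _ i) ?fe // => j _; apply: fe.
Qed.

Lemma eval_linear_hole (V : eqType) (env : V -> M) (u : term ar V) h :
  all_binary u -> uniq (vars u) -> h \in vars u ->
  {in vars u, forall v, v != h -> env v = e} -> eval ops env u = env h.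
Proof.
elim: u => [v _ _ | s f IH]; first by rewrite inE => /eqP->.
move=> bin u_uniq /flatten_mapP[i _ hi] env_e; have /andP[/eqP s2 _] := bin.
rewrite /= (@ops_unit _ _ i) //.
  apply: IH hi _ => //; first exact: all_binary_sub bin.
    by apply: flatten_map_uniq u_uniq _; rewrite mem_enum.
  by move=> v /vars_sub; apply: env_e.
move=> j ji; apply: eval_unit; first exact: all_binary_sub bin.
move=> v vj; apply: env_e; first exact: vars_sub vj.
apply: contra_neq ji => vh; subst v.
by apply: flatten_map_uniq_disjoint u_uniq _ _ vj hi; rewrite mem_enum.
Qed.

End Terms.

Lemma ord2_cases (i : 'I_2) : i = ord0 \/ i = lift ord0 ord0.
Proof. by case: i => -[|[|//]] ?; [left | right]; apply: val_inj. Qed.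

Lemma lift_binary_unit (T : monoidal_monad) Sym (ar : Sym -> nat) A
    (ops : alg_ops ar A) (e : A) :
  binary_unit ops e -> binary_unit (@lift_ops T _ _ _ ops) (eta e).
Proof.
move=> ops_unit s g i s2; rewrite /lift_ops.
move: (ops s) (ops_unit s) g i; rewrite s2 => o o_unit g i gj.
have o_unitr a : o (pair2 a e) = a.
  rewrite (o_unit _ ord0) ?pair2_0 // => j.
  by case: (ord2_cases j) => ->; rewrite ?eqxx ?pair2_1.
have o_unitl a : o (pair2 e a) = a.
  rewrite (o_unit _ (lift ord0 ord0)) ?pair2_1 // => j.
  by case: (ord2_cases j) => ->; rewrite ?eqxx ?pair2_0.
rewrite psin2 -[RHS]fmap_id.
case: (ord2_cases i) gj => -> gj.
  rewrite (gj (lift ord0 ord0)) ?neq_lift // psi_etar -!fmap_comp.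
  exact: eq_fmap.
rewrite (gj ord0) 1?eq_sym ?neq_lift // psi_etal -!fmap_comp.
exact: eq_fmap.
Qed.

Section RectangularBand.
Variables (A B : Type).

Definition rect_mul (u v : option (A * B)) : option (A * B) :=
  match u, v with
  | None, _ => v
  | _, None => u
  | Some (a, _), Some (_, b) => Some (a, b)
  end.

Lemma rect_mulxx u : rect_mul u u = u.
Proof. by case: u => [[]|]. Qed.

Lemma rect_mulx0 u : rect_mul u None = u.
Proof. by case: u => [[]|]. Qed.

Definition rect_op n : ('I_n -> option (A * B)) -> option (A * B) :=
  match n with
  | n'.+2 => fun g => rect_mul (g ord0) (g (lift ord0 ord0))
  | _ => fun _ => None
  end.

Variables (Sym : Type) (ar : Sym -> nat).

Definition rect_ops : alg_ops ar (option (A * B)) := fun s => @rect_op (ar s).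

Lemma rect_binary_unit : binary_unit rect_ops None.
Proof.
move=> s g i s2; rewrite /rect_ops; move: (ar s) s2 g i => n n2 g i gj; subst n.
case: (ord2_cases i) gj => -> gj /=.
  by rewrite (gj (lift ord0 ord0)) ?neq_lift ?rect_mulx0.
by rewrite (gj ord0) // eq_sym neq_lift.
Qed.

Lemma rect_ops_idem dot x : ar dot = 2 ->
  satisfies rect_ops (Var x) (Op dot (fun _ => Var x)).
Proof.
move=> dot2 env; rewrite /= /rect_ops; move: (ar dot) dot2 => n n2; subst n.
by rewrite /= rect_mulxx.
Qed.

Lemma lift_rect_ops_binary (T : monoidal_monad) s (y : T (option (A * B))) :
  ar s = 2 ->
  @lift_ops T _ _ _ rect_ops s (fun _ => y)
  = fmap (fun p => rect_mul p.1 p.2) (psi (y, y)).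
Proof.
move=> s2; rewrite /lift_ops /rect_ops; move: (ar s) s2 => n n2; subst n.
by rewrite psin2 -fmap_comp; apply: eq_fmap => -[u v] /=; rewrite pair2_0 pair2_1.
Qed.

End RectangularBand.

Lemma relevant_of_rect_idem (T : monoidal_monad) :
  (forall A B (m : T (A * B)%type), let y := fmap (@Some _) m in
     fmap (fun p => rect_mul p.1 p.2) (psi (y, y)) = y) ->
  relevant T.
Proof.
move=> idem A B m; rewrite psi_nat; apply: (@fmap_Some_inj T).
by rewrite -[RHS]idem psi_nat -!fmap_comp; apply: eq_fmap => -[[a b] [c d]].
Qed.

Theorem theorem5 (T : monoidal_monad) (Sym : Type) (ar : Sym -> nat)
    (dot : Sym) (Hdot : ar dot = 2)
    (t : term ar (option nat)) (x : nat) :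
  all_binary t ->
  None \in vars t ->
  uniq (vars t) ->
  Some x \notin vars t ->
  preserves T (plug t (Var x)) (plug t (Op dot (fun _ => Var x))) ->
  relevant T.
Proof.
move=> t_bin t_hole t_uniq x_notin preserved.
apply: relevant_of_rect_idem => A B m y.
pose ops := @rect_ops A B _ ar.
pose lifted := @lift_ops T _ _ _ ops.
pose env v := if v == x then y else eta None.
have lifted_unit : binary_unit lifted (eta None).
  exact: lift_binary_unit (@rect_binary_unit A B _ ar).
have eval_hole N : eval lifted env (plug t N) = eval lifted env N.
  rewrite eval_plug (eval_linear_hole lifted_unit t_bin t_uniq t_hole) //.
  move=> -[v|] // vt _.
  by rewrite /env; case: eqP vt x_notin => [-> -> //|].
have ops_idem : satisfies ops (Var x) (Op dot (fun _ => Var x)) by exact: rect_ops_idem.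
have := preserved _ _ (satisfies_plug t ops_idem) env.
by rewrite !eval_hole /= /lifted lift_rect_ops_binary // /env eqxx.
Qed.
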